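(* For each $n\geq1$, the chromatic polynomial of $\Sigma_n$ is $\chi(\Sigma_n,\lambda)=(-1)^{3^n-1}\lambda P_n(\lambda)$, where $P_n=P_{2,n}+3P_{1,n}+P_{0,n}$ and $P_{i,n}(\lambda)=H_{i,n}(1-\lambda,0)$ for $i=0,1,2$.
   Context: Graphs are finite. For a graph $G$, a spanning subgraph $A$ has vertex set $V(G)$ and edge set $E(A)\subseteq E(G)$; $k(A)$ is its number of components, $r(A)=|V(G)|-k(A)$, $n(A)=|E(A)|-r(A)$; the weight of $A$ is $(x-1)^{r(G)-r(A)}(y-1)^{n(A)}$. The graphs $\Sigma_n$ ($n\ge1$; Schreier graphs of the Hanoi Towers group $H^{(3)}$ with loops removed) each have three outmost vertices top, left, right: $\Sigma_1$ is the triangle $K_3$; $\Sigma_{n+1}$ is the disjoint union of three copies $G_1,G_2,G_3$ of $\Sigma_n$ together with three new edges joining left$(G_1)$ to top$(G_2)$, right$(G_1)$ to top$(G_3)$, and right$(G_2)$ to left$(G_3)$; its outmost vertices are top$(G_1)$, left$(G_2)$, right$(G_3)$. $H_{2,n}$ (resp. $H_{1,n}$, $H_{0,n}$) is the sum of the weights (with $G=\Sigma_n$) of the spanning subgraphs of $\Sigma_n$ in which the three outmost vertices lie in one component (resp. left and right outmost in one component, top in another; resp. the three in three distinct components). $\chi(G,\lambda)$ is the number of proper colorings of the vertices of $G$ with $\lambda$ colors. *)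

From HB Require Import structures.
From mathcomp Require Import all_boot all_order all_algebra.
Set Implicit Arguments. Unset Strict Implicit. Unset Printing Implicit Defensive.
Import Order.TTheory GRing.Theory Num.Theory.

(* The three vertex labels; copy 0 = G1, copy 1 = G2, copy 2 = G3.
   In Sigma_1 = K3: top = 0, left = 1, right = 2. *)
Definition o0 : 'I_3 := @Ordinal 3 0 isT.
Definition o1 : 'I_3 := @Ordinal 3 1 isT.
Definition o2 : 'I_3 := @Ordinal 3 2 isT.

(* Vertices of Sigma_n are words of length n over {0,1,2}; the first letter
   says which copy (G1,G2,G3) of Sigma_(n-1) the vertex lies in. *)
Definition sig_top (m : nat) : seq 'I_3 := nseq m o0.
Definition sig_left (m : nat) : seq 'I_3 := nseq m o1.
Definition sig_right (m : nat) : seq 'I_3 := nseq m o2.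

(* the three new edges of Sigma_(m+1) (one orientation):
   left(G1)-top(G2), right(G1)-top(G3), right(G2)-left(G3) *)
Definition bridge1 (m : nat) (a : 'I_3) (u : seq 'I_3) (b : 'I_3) (v : seq 'I_3) :=
  [|| [&& a == o0, u == sig_left m, b == o1 & v == sig_top m],
      [&& a == o0, u == sig_right m, b == o2 & v == sig_top m]
    | [&& a == o1, u == sig_right m, b == o2 & v == sig_left m]].

Definition bridge m a u b v := bridge1 m a u b v || bridge1 m b v a u.

Fixpoint sig_adj (u v : seq 'I_3) : bool :=
  match u, v with
  | [:: a], [:: b] => a != b
  | a :: u', b :: v' => ((a == b) && sig_adj u' v') || bridge (size u') a u' b v'
  | _, _ => false
  end.

Notation SV n := (n.-tuple 'I_3).
Definition Sadj (n : nat) : rel (SV n) := fun u v => sig_adj u v.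
Definition Sedges (n : nat) : {set {set SV n}} :=
  [set e : {set SV n} | [exists u : SV n, exists v : SV n, Sadj u v && (e == [set u; v])]].

Definition Stop (n : nat) : SV n := [tuple of nseq n o0].
Definition Sleft (n : nat) : SV n := [tuple of nseq n o1].
Definition Sright (n : nat) : SV n := [tuple of nseq n o2].

Definition sub_rel (T : finType) (A : {set {set T}}) : rel T :=
  fun x y => [set x; y] \in A.
Definition conn (T : finType) (A : {set {set T}}) : rel T := connect (sub_rel A).

Definition ncomp (T : finType) (A : {set {set T}}) : nat := n_comp (sub_rel A) T.
Definition rk (T : finType) (A : {set {set T}}) : nat := #|T| - ncomp A.
Definition nul (T : finType) (A : {set {set T}}) : nat := #|A| - rk A.
(* (these subtractions are never truncated: k(A) <= |V|, |A| >= r(A)) *)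

Local Open Scope ring_scope.

Definition weight (n : nat) (A : {set {set SV n}}) (x y : int) : int :=
  (x - 1) ^+ (rk (Sedges n) - rk A)%N * (y - 1) ^+ (nul A).

Definition cond2 n (A : {set {set SV n}}) : bool :=
  conn A (Stop n) (Sleft n) && conn A (Stop n) (Sright n).
Definition cond1 n (A : {set {set SV n}}) : bool :=
  conn A (Sleft n) (Sright n) && ~~ conn A (Stop n) (Sleft n).
Definition cond0 n (A : {set {set SV n}}) : bool :=
  [&& ~~ conn A (Stop n) (Sleft n), ~~ conn A (Stop n) (Sright n)
    & ~~ conn A (Sleft n) (Sright n)].

Definition H2 n (x y : int) : int :=
  \sum_(A in powerset (Sedges n) | cond2 A) weight A x y.
Definition H1 n (x y : int) : int :=
  \sum_(A in powerset (Sedges n) | cond1 A) weight A x y.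
Definition H0 n (x y : int) : int :=
  \sum_(A in powerset (Sedges n) | cond0 A) weight A x y.

Definition P2 n (l : int) : int := H2 n (1 - l) 0.
Definition P1 n (l : int) : int := H1 n (1 - l) 0.
Definition P0 n (l : int) : int := H0 n (1 - l) 0.
Definition Pn n (l : int) : int := P2 n l + 3 * P1 n l + P0 n l.

Definition chi (n : nat) (lam : nat) : nat :=
  #|[set f : {ffun SV n -> 'I_lam} | [forall u, forall v, Sadj u v ==> (f u != f v)]]|.

From HB Require Import structures.
From mathcomp Require Import all_boot all_order all_algebra.
From mathcomp Require Import zify ring.
Import Order.TTheory GRing.Theory Num.Theory.
Set Implicit Arguments. Unset Strict Implicit. Unset Printing Implicit Defensive.

(* (1) Whitney's expansion: for any graph on a finite vertex set V with edge
       set E, chi(lambda) = sum_{A subset E} (-1)^|A| lambda^k(A).  For each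
       colouring, inclusion-exclusion over its monochromatic edges turns the
       indicator of properness into a signed sum over edge sets A; colourings
       constant on the components of A are counted by lambda^k(A).
   (2) Each Whitney term is a Tutte weight: for a connected graph G on N
       vertices, (-1)^|A| lambda^k(A) = (-1)^(N-1) lambda (x-1)^(r(G)-r(A))
       (y-1)^n(A) at x = 1 - lambda, y = 0.  The exponents are honest because
       N <= |A| + k(A) (adding an edge merges at most two components).
   (3) The letter rotation 0 -> 1 -> 2 -> 0 is an automorphism of Sigma_n
       sending top -> left -> right -> top, so the three classes of spanning
       subgraphs joining exactly one pair of outmost vertices all have total
       weight H_{1,n}, and the sum of all weights is H_2 + 3 H_1 + H_0.
   Sigma_n is connected, so (1)-(3) combine into the theorem. *)

Section SpanningSubgraphs.
Variable T : finType.
Implicit Types (A : {set {set T}}) (x y u v : T).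

Lemma conn_sym A : connect_sym (sub_rel A).
Proof. by apply: sym_connect_sym => x y; rewrite /sub_rel setUC. Qed.

Lemma set2_eq x y u v :
  [set x; y] = [set u; v] -> (x = u /\ y = v) \/ (x = v /\ y = u).
Proof.
move=> E.
have hx : x \in [set u; v] by rewrite -E !inE eqxx.
have hy : y \in [set u; v] by rewrite -E !inE eqxx orbT.
have hu : u \in [set x; y] by rewrite E !inE eqxx.
have hv : v \in [set x; y] by rewrite E !inE eqxx orbT.
move: hx hy hu hv; rewrite !inE.
do 4! (case/orP=> /eqP ?); subst; by [left | right].
Qed.

Lemma connect_add_edge (e e' : rel T) x y :
  connect_sym e ->
  (forall u v, e' u v -> [|| e u v, (u == x) && (v == y) | (u == y) && (v == x)]) ->
  forall u v, connect e' u v ->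
  connect e u v \/ ((connect e u x || connect e u y) /\ (connect e v x || connect e v y)).
Proof.
move=> sym he' u v /connectP[p pp ->] {v}.
elim: p u pp => [|w p IH] u /=; first by left.
case/andP=> euw /IH [cw | [Sw Sv]].
- case/or3P: (he' _ _ euw) => [e1 | /andP[/eqP-> /eqP ew] | /andP[/eqP-> /eqP ew]].
  + by left; apply: connect_trans (connect1 e1) cw.
  + right; split; first by rewrite connect0.
    by subst w; rewrite [connect e _ y]sym cw orbT.
  + right; split; first by rewrite connect0 orbT.
    by subst w; rewrite [connect e _ x]sym cw.
- right; split=> //.
  case/or3P: (he' _ _ euw) => [e1 | /andP[/eqP-> _] | /andP[/eqP-> _]].
  + by case/orP: Sw => h; apply/orP; [left|right]; apply: connect_trans (connect1 e1) h.
  + by rewrite connect0.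
  + by rewrite connect0 orbT.
Qed.

(* Adding one edge xy to e lowers the number of components by at most one:
   distinct components of e not containing y stay distinct, since by
   connect_add_edge any two of them that merge both reach x. *)
Lemma n_comp_add_edge (e e' : rel T) x y :
  connect_sym e -> connect_sym e' -> subrel e e' ->
  (forall u v, e' u v -> [|| e u v, (u == x) && (v == y) | (u == y) && (v == x)]) ->
  (n_comp e T <= (n_comp e' T).+1)%N.
Proof.
move=> syme syme' sub he'.
pose D := [pred r | roots e r && (r != fingraph.root e y)].
have le_D : (n_comp e T <= #|D|.+1)%N.
  apply: (@leq_trans #|[predU1 fingraph.root e y & D]|).
    apply: subset_leq_card; apply/subsetP=> r; rewrite !inE /= => /andP[-> _].
    by case: eqP => // _; rewrite orbT.
  by rewrite cardU1; case: (_ \notin _).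
apply: (leq_trans le_D); rewrite ltnS.
have reach_x r : fingraph.root e r = r -> r != fingraph.root e y ->
    (connect e r x || connect e r y) -> connect e r x.
  move=> rr nr /orP[//|/(fingraph.rootP syme) ry].
  by move: nr; rewrite -ry rr eqxx.
have inj : {in D &, injective (fingraph.root e')}.
  move=> r1 r2 /andP[/eqP rr1 n1] /andP[/eqP rr2 n2] /(fingraph.rootP syme') c12.
  rewrite -rr1 -rr2; apply/(fingraph.rootP syme).
  case: (connect_add_edge syme he' c12) => [// | [S1 S2]].
  apply: connect_trans (reach_x _ rr1 n1 S1) _.
  by rewrite syme; apply: reach_x.
rewrite -(card_in_imset inj); apply: subset_leq_card; apply/subsetP=> r.
by case/imsetP=> z _ ->; rewrite !inE /= roots_root.
Qed.

Lemma ncomp_set0 : ncomp (set0 : {set {set T}}) = #|T|.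
Proof.
rewrite /ncomp /n_comp_mem; apply: eq_card => x; rewrite !inE andbT.
apply/eqP; have /connectP[p pp ->] := connect_root (sub_rel set0) x.
by case: p pp => //= z p; rewrite /sub_rel inE.
Qed.

Lemma card_le_edges_ncomp A : (#|T| <= #|A| + ncomp A)%N.
Proof.
have [m] := ubnP #|A|; elim: m A => // m IH A.
have [->|/set0Pn[s sA]] := eqVneq A set0; first by rewrite ncomp_set0 cards0.
rewrite (cardsD1 s A) sA add1n ltnS => /IH le_As.
apply: (leq_trans le_As); rewrite addSn -addnS leq_add2l.
have [t _|T0] := pickP (@predT T); last first.
  by apply: leq_trans (max_card _) _; rewrite (eq_card0 T0).
have sub : subrel (sub_rel (A :\ s)) (sub_rel A).
  by move=> u v; rewrite /sub_rel !inE => /andP[].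
rewrite /ncomp.
have [/existsP[x /existsP[y /eqP sxy]]|not_pair] :=
  boolP [exists x, exists y, s == [set x; y]].
  apply: (n_comp_add_edge (x:=x) (y:=y) (conn_sym _) (conn_sym _) sub) => u v.
  rewrite /sub_rel !inE; case: eqP => [e1 _|_ /= ->] //=.
  rewrite sxy in e1; case: (set2_eq e1) => [[-> ->]|[-> ->]]; by rewrite !eqxx ?orbT.
apply: (n_comp_add_edge (x:=t) (y:=t) (conn_sym _) (conn_sym _) sub) => u v.
rewrite /sub_rel !inE; case: eqP => [e1 _|_ /= ->] //=.
by move: not_pair; rewrite -e1; case/existsP; exists u; apply/existsP; exists v.
Qed.

Lemma ncomp_gt0 A (t : T) : (0 < ncomp A)%N.
Proof.
apply/card_gt0P; exists (fingraph.root (sub_rel A) t).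
by rewrite !inE andbT roots_root //; apply: conn_sym.
Qed.

End SpanningSubgraphs.

Section WhitneyExpansion.
Variable T : finType.

(* Maps constant along e are determined by their values on the component
   roots, so there are |R|^(number of components) of them. *)
Lemma card_const_on_components (R : finType) (e : rel T) : connect_sym e ->
  #|[set f : {ffun T -> R} | [forall x, forall y, e x y ==> (f x == f y)]]|
    = (#|R| ^ n_comp e T)%N.
Proof.
move=> sym.
pose K := [set f : {ffun T -> R} | [forall x, forall y, e x y ==> (f x == f y)]].
pose S := {x : T | roots e x}.
have rootS x : roots e (fingraph.root e x) by apply: roots_root.
pose restr (f : {ffun T -> R}) : {ffun S -> R} := [ffun r => f (val r)].
pose extend (g : {ffun S -> R}) : {ffun T -> R} := [ffun x => g (@exist T (roots e) _ (rootS x))].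
have f_root f : f \in K -> forall x, f (fingraph.root e x) = f x.
  rewrite inE => /forallP fK x; apply/eqP.
  have cl : closed e [pred z | f z == f x].
    by move=> u v euv; move: (fK u) => /forallP/(_ v); rewrite euv !inE => /eqP ->.
  by have := closed_connect cl (connect_root e x); rewrite !inE eqxx.
have restrK : {in K, cancel restr extend}.
  by move=> f fK; apply/ffunP=> x; rewrite !ffunE f_root.
have extendK : cancel extend restr.
  move=> g; apply/ffunP=> r; rewrite !ffunE; congr (g _); apply: val_inj => /=.
  by case: r => r /= /eqP.
have extendP g : extend g \in K.
  rewrite inE; apply/forallP=> x; apply/forallP=> y; apply/implyP=> exy.
  rewrite !ffunE; apply/eqP; congr (g _); apply: val_inj => /=.
  by apply/(fingraph.rootP sym)/connect1.
rewrite -(card_in_imset (can_in_inj restrK)).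
have -> : restr @: K = setT.
  apply/eqP; rewrite eqEsubset subsetT /=; apply/subsetP=> g _.
  by apply/imsetP; exists (extend g); rewrite ?extendK.
rewrite cardsT card_ffun card_sig; congr (_ ^ _).
by apply: eq_card => x; rewrite !inE andbT.
Qed.

Definition Eset (adj : rel T) : {set {set T}} :=
  [set s | [exists u, exists v, adj u v && (s == [set u; v])]].

Definition monochromatic (R : eqType) (f : T -> R) (s : {set T}) :=
  [forall u, forall v, (u \in s) ==> (v \in s) ==> (f u == f v)].

Lemma EsetP adj s : s \in Eset adj -> exists u v, adj u v /\ s = [set u; v].
Proof. by rewrite inE => /existsP[u /existsP[v /andP[a /eqP ->]]]; exists u, v. Qed.

Lemma monochromatic2 (R : eqType) (f : T -> R) u v :
  monochromatic f [set u; v] = (f u == f v).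
Proof.
apply/forallP/idP => [/(_ u)/forallP/(_ v)|fuv a]; first by rewrite !inE !eqxx orbT.
apply/forallP=> b; rewrite !inE.
by apply/implyP=> /orP[/eqP->|/eqP->]; apply/implyP=> /orP[/eqP->|/eqP->];
  rewrite ?eqxx // eq_sym.
Qed.

Lemma monochromatic_edges adj (J : {set {set T}}) (R : eqType) (f : T -> R) :
  J \subset Eset adj ->
  [forall s in J, monochromatic f s] = [forall x, forall y, sub_rel J x y ==> (f x == f y)].
Proof.
move=> /subsetP JE; apply/forallP/forallP => [h x|h s].
  apply/forallP=> y; apply/implyP=> sJ.
  by move: (h [set x; y]); rewrite [_ \in J]sJ monochromatic2.
apply/implyP=> sJ; have [a [b [_ sab]]] := EsetP (JE _ sJ).
rewrite sab monochromatic2.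
by move: (h a) => /forallP/(_ b); rewrite /sub_rel -sab sJ.
Qed.

Lemma proper_no_monochromatic_edge adj (R : eqType) (f : T -> R) :
  [forall u, forall v, adj u v ==> (f u != f v)] =
  [forall s, ~~ ((s \in Eset adj) && monochromatic f s)].
Proof.
apply/forallP/forallP => [h s|h u].
  apply/negP=> /andP[/EsetP[u [v [auv ->]]]]; rewrite monochromatic2 => fuv.
  by move: (h u) => /forallP/(_ v); rewrite auv fuv.
apply/forallP=> v; apply/implyP=> auv; apply/negP=> fuv.
move: (h [set u; v]); rewrite monochromatic2 fuv andbT => /negP; apply.
by rewrite inE; apply/existsP; exists u; apply/existsP; exists v; rewrite auv eqxx.
Qed.

Local Open Scope ring_scope.

(* Inclusion-exclusion for one colouring: expanding
   prod_{s edge} (1 - [s monochromatic]) over subsets J of edges. *)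
Lemma proper_indicator_expand adj (lam : nat) (f : {ffun T -> 'I_lam}) :
  (if [forall u, forall v, adj u v ==> (f u != f v)] then 1 else 0 : int) =
  \sum_(J in powerset (Eset adj))
     (if [forall s in J, monochromatic f s] then (-1) ^+ #|J| else 0).
Proof.
pose F s : int := if (s \in Eset adj) && monochromatic f s then -1 else 0.
have prod_F : \prod_(s : {set T}) (F s + 1) =
    (if [forall u, forall v, adj u v ==> (f u != f v)] then 1 else 0).
  rewrite proper_no_monochromatic_edge; case: (boolP [forall s, _]) => [/forallP h|].
    by apply: big1 => s _; rewrite /F (negbTE (h s)) add0r.
  rewrite negb_forall => /existsP[s]; rewrite negbK => hs.
  by rewrite (bigD1 s) //= /F hs addNr mul0r.
rewrite -prod_F (@bigA_distr int 0 1 *%R +%R _ (fun s => F s) (fun _ => 1)).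
rewrite (big_mkcond (fun J => J \in powerset _)) /=; apply: eq_bigr => J _.
rewrite -big_mkcond /= inE.
case: (boolP (J \subset Eset adj)) => [JE|nJE] /=.
  case: (boolP [forall s in J, _]) => [/forallP h|].
    rewrite -prodr_const; apply: eq_bigr => s sJ.
    by rewrite /F (subsetP JE _ sJ); move: (h s); rewrite sJ /= => ->.
  rewrite negb_forall => /existsP[s]; rewrite negb_imply => /andP[sJ ns].
  by rewrite (bigD1 s) //= /F (negbTE ns) andbF mul0r.
have [s sJ ns] : exists2 s, (s \in J) & (s \notin Eset adj).
  apply/exists_inP; rewrite -negb_forall_in.
  by apply: contra nJE => /forall_inP h; apply/subsetP.
by rewrite (bigD1 s) //= /F (negbTE ns) mul0r.
Qed.

Lemma chromatic_expansion adj (lam : nat) :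
  (#|[set f : {ffun T -> 'I_lam} | [forall u, forall v, adj u v ==> (f u != f v)]]|)%:Z =
  \sum_(J in powerset (Eset adj)) (-1) ^+ #|J| * lam%:Z ^+ ncomp J.
Proof.
rewrite -natz -sum1_card natr_sum big_mkcond /=.
under eq_bigr => f _ do rewrite inE proper_indicator_expand.
rewrite exchange_big /=; apply: eq_bigr => J; rewrite inE => JE.
rewrite -big_mkcond /= sumr_const -mulr_natr; congr (_ * _).
rewrite -[lam%:Z]natz -natrX -[in RHS](card_ord lam) /ncomp -(card_const_on_components _ (conn_sym J)).
by apply: congr1; apply: eq_card => f; rewrite !inE -(monochromatic_edges _ JE).
Qed.

End WhitneyExpansion.

Section Relabelling.
Variable T : finType.
Variable h : T -> T.
Hypothesis injh : injective h.
Implicit Types (A : {set {set T}}) (x y : T).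

Definition mapA A : {set {set T}} := [set h @: (s : {set T}) | s in A].

Lemma imset_pair x y : h @: [set x; y] = [set h x; h y].
Proof. by rewrite imsetU1 imset_set1. Qed.

Lemma mapA_inj : injective mapA.
Proof. exact: imset_inj (imset_inj injh). Qed.

Lemma card_mapA A : #|mapA A| = #|A|.
Proof. by rewrite card_imset //; apply: imset_inj. Qed.

Lemma sub_rel_mapA A x y : sub_rel (mapA A) (h x) (h y) = sub_rel A x y.
Proof. by rewrite /sub_rel -imset_pair mem_imset //; apply: imset_inj. Qed.

(* h is an isomorphism from A onto mapA A, hence preserves connectivity and
   the number of components. *)
Lemma adjunction_mapA A : rel_adjunction h (sub_rel (mapA A)) (sub_rel A) predT.
Proof.
apply: strict_adjunction.
- exact: conn_sym.
- by move=> x y _; rewrite !inE.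
- exact: injh.
- by apply/subsetP=> y _; apply: inj_card_onto.
- by move=> x y _; rewrite sub_rel_mapA.
Qed.

Lemma conn_mapA A x y : conn (mapA A) (h x) (h y) = conn A x y.
Proof. by rewrite /conn (rel_functor (adjunction_mapA A)). Qed.

Lemma ncomp_mapA A : ncomp (mapA A) = ncomp A.
Proof.
by rewrite /ncomp (adjunction_n_comp h (conn_sym _) (conn_sym _) _ (adjunction_mapA A)).
Qed.

End Relabelling.

Lemma connect_homo (T T' : finType) (f : T -> T') (e : rel T) (e' : rel T') :
  (forall x y, e x y -> e' (f x) (f y)) ->
  forall x y, connect e x y -> connect e' (f x) (f y).
Proof.
move=> h x _ /connectP[p pp ->]; elim: p x pp => //= z p IH x /andP[exz /IH].
exact: connect_trans (connect1 (h _ _ exz)).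
Qed.

Local Notation rot := (@ordS 3).

Lemma map_rot_eq_nseq m (u : seq 'I_3) j :
  (map rot u == nseq m j) = (u == nseq m (ord_pred j)).
Proof. by rewrite -[in LHS](ord_predK j) -map_nseq (inj_eq (inj_map (@ordS_inj 3))). Qed.

Lemma bridge_rot m a u b v :
  bridge m (rot a) (map rot u) (rot b) (map rot v) = bridge m a u b v.
Proof.
rewrite /bridge /bridge1 /sig_left /sig_right /sig_top !map_rot_eq_nseq.
have -> : ord_pred o0 = o2 by apply: val_inj.
have -> : ord_pred o1 = o0 by apply: val_inj.
have -> : ord_pred o2 = o1 by apply: val_inj.
case: a => [[|[|[|k]]] Ha] //; case: b => [[|[|[|l]]] Hb] //;
  rewrite /eq_op /= ?andbF ?orbF ?orFb //; by rewrite andbC.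
Qed.

Lemma sig_adj_cons a u b v : (u != [::]) || (v != [::]) ->
  sig_adj (a :: u) (b :: v) = ((a == b) && sig_adj u v) || bridge (size u) a u b v.
Proof. by case: u => [|x u]; case: v => [|y v]. Qed.

Lemma sig_adj_rot u v : sig_adj (map rot u) (map rot v) = sig_adj u v.
Proof.
elim: u v => [|a u IH] [|b v] //; first by case: u {IH}.
have [/andP[/eqP-> /eqP->]|nn] := boolP ((u == [::]) && (v == [::])).
  by rewrite /= (inj_eq (@ordS_inj 3)).
have nn' : (u != [::]) || (v != [::]) by rewrite -negb_and.
have nn'' : (map rot u != [::]) || (map rot v != [::]).
  by move: nn'; case: u {IH nn}; case: v.
rewrite !map_cons (sig_adj_cons _ _ nn'') (sig_adj_cons _ _ nn').
by rewrite (inj_eq (@ordS_inj 3)) IH size_map bridge_rot.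
Qed.

Lemma bridge_size m a u b v : bridge m a u b v -> size u = m /\ size v = m.
Proof.
rewrite /bridge /bridge1 /sig_left /sig_right /sig_top.
by do ![case/orP | case/and4P=> _ /eqP-> _ /eqP->]; rewrite !size_nseq.
Qed.

Lemma sig_adj_sym u v : sig_adj u v = sig_adj v u.
Proof.
elim: u v => [|a u IH] [|b v] //; [by case: v | by case: u {IH} |].
have [/andP[/eqP-> /eqP->]|nn] := boolP ((u == [::]) && (v == [::])).
  by rewrite /= eq_sym.
have nn' : (u != [::]) || (v != [::]) by rewrite -negb_and.
have nn2 : (v != [::]) || (u != [::]) by rewrite orbC.
rewrite (sig_adj_cons _ _ nn') (sig_adj_cons _ _ nn2) eq_sym IH.
congr (_ || _); rewrite [in RHS]/bridge orbC.
have [->//|ne] := eqVneq (size u) (size v).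
by apply/idP/idP => /bridge_size [h1 h2]; move: ne; rewrite ?h1 ?h2 eqxx.
Qed.

Definition rotV n (t : SV n) : SV n := [tuple of map rot t].

Lemma rotV_inj n : injective (@rotV n).
Proof. by move=> t t' /(congr1 val) /= /(inj_map (@ordS_inj 3)) E; apply: val_inj. Qed.

Lemma Sadj_rotV n (x y : SV n) : Sadj (rotV x) (rotV y) = Sadj x y.
Proof. exact: sig_adj_rot. Qed.

Lemma rotV_top n : rotV (Stop n) = Sleft n.
Proof. by apply: val_inj; rewrite /= map_nseq; congr nseq; apply: val_inj. Qed.
Lemma rotV_left n : rotV (Sleft n) = Sright n.
Proof. by apply: val_inj; rewrite /= map_nseq; congr nseq; apply: val_inj. Qed.
Lemma rotV_right n : rotV (Sright n) = Stop n.
Proof. by apply: val_inj; rewrite /= map_nseq; congr nseq; apply: val_inj. Qed.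

Lemma Sedges_Eset n : Sedges n = Eset (@Sadj n).
Proof. by []. Qed.

Lemma mapA_rotV_Sedges n : mapA (@rotV n) (Sedges n) = Sedges n.
Proof.
apply/eqP; rewrite eqEcard card_mapA ?leqnn ?andbT; last exact: rotV_inj.
apply/subsetP=> s' /imsetP[s /EsetP[u [v [auv ->]]] ->].
rewrite imset_pair inE; apply/existsP; exists (rotV u); apply/existsP; exists (rotV v).
by rewrite Sadj_rotV auv eqxx.
Qed.

Lemma powerset_mapA_rotV n (B : {set {set SV n}}) :
  (mapA (@rotV n) B \in powerset (Sedges n)) = (B \in powerset (Sedges n)).
Proof.
rewrite -{1}mapA_rotV_Sedges !inE; apply/idP/idP => [sub|]; last exact: imsetS.
apply/subsetP=> s sB; have /(subsetP sub) : (@rotV n) @: s \in mapA (@rotV n) B.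
  by apply/imsetP; exists s.
by rewrite mem_imset //; apply: imset_inj; exact: rotV_inj.
Qed.

Lemma sub_rel_Sedges n (x y : SV n) : sub_rel (Sedges n) x y = Sadj x y.
Proof.
apply/idP/idP => [/EsetP[u [v [auv E]]]|axy].
  by case: (set2_eq E) => [[-> ->]|[-> ->]] //; rewrite /Sadj sig_adj_sym.
by rewrite /sub_rel inE; apply/existsP; exists x; apply/existsP; exists y; rewrite axy eqxx.
Qed.

Definition tcons n (a : 'I_3) (x : SV n) : SV n.+1 := [tuple of a :: x].

Lemma Sadj_tcons n a (x y : SV n.+1) : Sadj x y -> Sadj (tcons a x) (tcons a y).
Proof.
rewrite /Sadj /tcons /=; case: x => [[|b x'] Hx] //= axy.
by rewrite eqxx axy.
Qed.

(* Sigma_n is connected: every vertex reaches top, first inside its copy,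
   then through the bridge of its copy to the copy G1 containing top. *)
Lemma Sconnected n (t : SV n.+1) : connect (@Sadj n.+1) t (Stop n.+1).
Proof.
elim: n t => [|n IH] t.
  case/tupleP: t => a t0; rewrite tuple0.
  have [ea|na] := eqVneq a o0; first by rewrite ea; apply: eq_connect0; apply: val_inj.
  by apply: connect1; rewrite /Sadj /= na.
case/tupleP: t => a t'.
have lift b : forall x y : SV n.+1, connect (@Sadj n.+1) x y ->
    connect (@Sadj n.+2) (tcons b x) (tcons b y).
  by apply: connect_homo => x y; apply: Sadj_tcons.
apply: connect_trans (lift a _ _ (IH t')) _.
have Etop : tcons o0 (Stop n.+1) = Stop n.+2 by apply: val_inj.
have bridge_to_G1 (c : SV n.+1) : Sadj (tcons a (Stop n.+1)) (tcons o0 c) ->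
    connect (@Sadj n.+2) (tcons a (Stop n.+1)) (Stop n.+2).
  by move=> adj; apply: connect_trans (connect1 adj) _; rewrite -Etop; apply: lift.
case: a {lift} bridge_to_G1 => [[|[|[|k]]] Ha] // bridge_to_G1.
- by rewrite -Etop (_ : Ordinal Ha = o0) //; apply: val_inj.
- apply: (bridge_to_G1 (Sleft n.+1)); rewrite /Sadj /=.
  by rewrite size_nseq /bridge /bridge1 /sig_top /sig_left /sig_right /= !eqxx ?orbT.
- apply: (bridge_to_G1 (Sright n.+1)); rewrite /Sadj /=.
  by rewrite size_nseq /bridge /bridge1 /sig_top /sig_left /sig_right /= !eqxx ?orbT.
Qed.

Lemma ncomp_Sedges n : ncomp (Sedges n.+1) = 1%N.
Proof.
rewrite /ncomp -[RHS](n_comp_connect (conn_sym (Sedges n.+1)) (Stop n.+1)).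
apply: eq_n_comp_r => x; rewrite !inE (conn_sym (Sedges n.+1)).
by rewrite (eq_connect (@sub_rel_Sedges n.+1)) Sconnected.
Qed.

Local Open Scope ring_scope.

Section OutmostPatterns.
Variable n : nat.
Local Notation E := (Sedges n).
Local Notation rotE := (mapA (@rotV n)).
Local Notation tp := (Stop n).
Local Notation lf := (Sleft n).
Local Notation rt := (Sright n).
Implicit Types (A : {set {set SV n}}).

Lemma conn_rotE_tp_lf A : conn (rotE A) tp lf = conn A tp rt.
Proof. by rewrite -[RHS](conn_mapA (@rotV_inj n)) rotV_top rotV_right; apply: conn_sym. Qed.

Lemma conn_rotE_tp_rt A : conn (rotE A) tp rt = conn A lf rt.
Proof. by rewrite -[RHS](conn_mapA (@rotV_inj n)) rotV_left rotV_right; apply: conn_sym. Qed.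

Lemma conn_rotE_lf_rt A : conn (rotE A) lf rt = conn A tp lf.
Proof. by rewrite -[RHS](conn_mapA (@rotV_inj n)) rotV_top rotV_left. Qed.

(* Exactly one of the five connectivity patterns of {top, left, right} holds:
   all connected, exactly one of the three pairs connected, or none. *)
Lemma outmost_patterns A :
  (cond2 A + cond1 A + cond1 (rotE A) + cond1 (rotE (rotE A)) + cond0 A = 1)%N.
Proof.
rewrite /cond2 /cond1 /cond0 !(conn_rotE_tp_lf, conn_rotE_tp_rt, conn_rotE_lf_rt).
have tr u v w : conn A u v -> conn A v w -> conn A u w by apply: connect_trans.
have sy u v : conn A u v = conn A v u by apply: conn_sym.
have through_rt : conn A tp rt -> conn A lf rt -> conn A tp lf.
  by move=> h1 h2; apply: tr h1 _; rewrite sy.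
have through_lf : conn A tp lf -> conn A lf rt -> conn A tp rt by apply: tr.
have through_tp : conn A tp lf -> conn A tp rt -> conn A lf rt.
  by move=> h1; apply: tr; rewrite sy.
move: through_rt through_lf through_tp.
case: (conn A tp lf); case: (conn A tp rt); case: (conn A lf rt) => h1 h2 h3 //;
  by [have := h1 isT isT | have := h2 isT isT | have := h3 isT isT].
Qed.

Lemma sum_weight_rotE (Q : pred {set {set SV n}}) x y :
  \sum_(A in powerset E | Q (rotE A)) weight A x y = \sum_(A in powerset E | Q A) weight A x y.
Proof.
rewrite [RHS](reindex_inj (mapA_inj (@rotV_inj n))) /=.
apply: eq_big => [B|B _]; first by rewrite powerset_mapA_rotV.
by rewrite /weight /nul /rk ncomp_mapA ?card_mapA //; exact: rotV_inj.
Qed.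

Lemma sum_weight_split x y :
  \sum_(A in powerset E) weight A x y = H2 n x y + 3 * H1 n x y + H0 n x y.
Proof.
have sum_ind (b : pred {set {set SV n}}) :
    \sum_(A in powerset E | b A) weight A x y = \sum_(A in powerset E) (b A)%:R * weight A x y.
  by rewrite big_mkcondr; apply: eq_bigr => A _; case: (b A); rewrite ?mul1r ?mul0r.
have H1_rot : \sum_(A in powerset E | cond1 (rotE A)) weight A x y = H1 n x y.
  exact: sum_weight_rotE.
have H1_rot2 : \sum_(A in powerset E | cond1 (rotE (rotE A))) weight A x y = H1 n x y.
  by rewrite (sum_weight_rotE (fun B => cond1 (rotE B))) H1_rot.
have -> : 3 * H1 n x y = H1 n x y
    + \sum_(A in powerset E | cond1 (rotE A)) weight A x y
    + \sum_(A in powerset E | cond1 (rotE (rotE A))) weight A x y.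
  by rewrite H1_rot H1_rot2; ring.
rewrite /H2 /H1 /H0 !sum_ind -!big_split; apply: eq_bigr => A _ /=.
by rewrite -!mulrDl -!natrD !addnA outmost_patterns mul1r.
Qed.

End OutmostPatterns.

(* A Whitney term of a connected graph on N vertices as a Tutte weight at
   (1 - l, 0): with k = k(A) and a = |A|, the exponents (N-1)-(N-k) and
   a-(N-k) are r(G)-r(A) and n(A), honest since 1 <= k <= N <= a + k. *)
Lemma whitney_term_tutte (N k a : nat) (l : int) :
  (1 <= k)%N -> (k <= N)%N -> (N <= a + k)%N ->
  (-1) ^+ a * l ^+ k =
  (-1) ^+ (N - 1)%N * l * ((1 - l - 1) ^+ ((N - 1) - (N - k))%N * (0 - 1) ^+ (a - (N - k))%N).
Proof.
case: k => [//|k] _ hk hN.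
have -> : ((N - 1) - (N - k.+1))%N = k by lia.
have -> : 1 - l - 1 = - l by ring.
have sign : (-1 : int) ^+ a = (-1) ^+ (N - 1)%N * (-1) ^+ k * (-1) ^+ (a - (N - k.+1))%N.
  rewrite -!exprD (_ : (N - 1 + k + (a - (N - k.+1)))%N = (a + k.*2)%N); last by lia.
  by rewrite exprD -mul2n exprM sqrrN !expr1n mulr1.
by rewrite sign sub0r exprS (exprNn l); ring.
Qed.

Theorem proposition4p12 (n : nat) (hn : (1 <= n)%N) (lam : nat) :
  (chi n lam)%:Z = (-1) ^+ (3 ^ n - 1)%N * lam%:Z * Pn n lam%:Z.
Proof.
case: n hn => [//|m] _.
have card_SV : #|{: SV m.+1}| = (3 ^ m.+1)%N by rewrite card_tuple card_ord.
rewrite /chi chromatic_expansion -Sedges_Eset.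
rewrite /Pn /P2 /P1 /P0 -sum_weight_split mulr_sumr; apply: eq_bigr => A _.
rewrite /weight /nul /rk ncomp_Sedges card_SV; apply: whitney_term_tutte.
- exact: ncomp_gt0 (Stop m.+1).
- by rewrite -card_SV max_card.
- by rewrite -card_SV card_le_edges_ncomp.
Qed.
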